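(* Let $\mathbf{f}$ be the Fibonacci word and $\phi=\frac{1+\sqrt5}{2}$. There is a constant $c\le \frac{4}{\sqrt5}\phi\approx 2.89$ such that for every positive integer $k$ and every index $i\ge 0$ of $\mathbf{f}$, there is a $k$-antipower with block length at most $ck$ starting at position $i$ of $\mathbf{f}$.
   Context: The Fibonacci word is $\mathbf{f}=\sigma^{\omega}(0)=0100101001001\cdots$, the fixed point of the morphism $\sigma(0)=01$, $\sigma(1)=0$ (i.e. the infinite word having every $\sigma^n(0)$ as a prefix). Words are indexed from $0$. A $k$-antipower is a word that is the concatenation of $k$ pairwise distinct words (blocks) of equal length; that common length is the block length. *)

From mathcomp Require Import all_boot.
From Stdlib Require Import Reals.

Definition fib_sigma_letter (a : nat) : seq nat :=
  if a == 0 then [:: 0; 1] else [:: 0].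

Definition fib_sigma (w : seq nat) : seq nat := flatten (map fib_sigma_letter w).

Definition fib_prefix (n : nat) : seq nat := iter n fib_sigma [:: 0].

(* The Fibonacci word f = sigma^omega(0), indexed from 0: its i-th letter is the
   i-th letter of sigma^n(0) for any n with |sigma^n(0)| > i; n = i.+1 suffices
   since |sigma^n(0)| = F_{n+2} > n. *)
Definition fibword (i : nat) : nat := nth 0 (fib_prefix i.+1) i.

Definition factor (x : nat -> nat) (p m : nat) : seq nat :=
  [seq x (p + t) | t <- iota 0 m].

Definition antipower_at (x : nat -> nat) (i k m : nat) : bool :=
  uniq [seq factor x (i + j * m) m | j <- iota 0 k].

Definition golden_ratio : R := ((1 + sqrt 5) / 2)%R.

(* The Fibonacci word is the mechanical word of slope tau = 1/phi:
   f_n = 1 exactly when floor((n+2) tau) = floor((n+1) tau).  Two factors of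
   length m at positions p and p + D therefore coincide only if the carry of
   floor((x + D) tau) - floor(x tau) - floor(D tau), which is 1 iff
   {x tau} + {D tau} >= 1, is constant for x in a window of m + 1 consecutive
   positions.  As F_(j+1) tau lies within tau^(j+1) of an integer, any F_(n+2)
   consecutive points z + t tau visit [0, tau^n) modulo 1; hence when
   tau^n <= {D tau} <= 1 - tau^n and m + 1 >= F_(n+2) the carry takes both
   values and the factors differ.  For m = 2 F_(r+2), with r largest such that
   2 k tau^(r+1) > 1, the shifts D = d m (0 < d < k) have
   {D tau} in {2 d tau^(r+2), 1 - 2 d tau^(r+2)}, inside
   [tau^(r+1), 1 - tau^(r+1)], and Binet's formula bounds m by
   4 phi k / sqrt 5. *)

From mathcomp Require Import all_boot zify.
From Stdlib Require Import Reals ZArith Lra Lia.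

Open Scope R_scope.

Definition tau : R := (sqrt 5 - 1) / 2.

Lemma sqrt5_sq : sqrt 5 * sqrt 5 = 5.
Proof. by apply: sqrt_sqrt; lra. Qed.

Lemma sqrt5_bounds : 2 < sqrt 5 < 3.
Proof.
have := sqrt5_sq; have : 0 < sqrt 5 by apply: sqrt_lt_R0; lra.
by split; nra.
Qed.

Lemma tau_sq : tau * tau = 1 - tau.
Proof. by rewrite /tau; have := sqrt5_sq; nra. Qed.

Lemma tau_bounds : 1 / 2 < tau < 1.
Proof. by rewrite /tau; have := sqrt5_sq; have := sqrt5_bounds; split; nra. Qed.

Lemma golden_ratio_tau : golden_ratio = 1 + tau.
Proof. by rewrite /golden_ratio /tau; lra. Qed.

Lemma sqrt5_tau : sqrt 5 = 1 + 2 * tau.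
Proof. by rewrite /tau; lra. Qed.

Lemma pow_tau_pos n : 0 < tau ^ n.
Proof. by apply: pow_lt; have := tau_bounds; lra. Qed.

Lemma pow_tau_SS n : tau ^ n.+2 = tau ^ n - tau ^ n.+1.
Proof.
have -> : tau ^ n.+2 = (tau * tau) * tau ^ n by rewrite /=; ring.
by rewrite tau_sq /=; ring.
Qed.

Lemma pow_opp x n : (- x) ^ n = if odd n then - x ^ n else x ^ n.
Proof. by elim: n => [|n IH] //=; rewrite IH; case: (odd n) => /=; ring. Qed.

Lemma sqr_neq_5_mul_sqr (n m : nat) : (0 < n)%nat -> (m * m <> 5 * n * n)%nat.
Proof.
move=> n_gt0 eq_mn.
have m_gt0 : (0 < m)%nat by case: m eq_mn => [|m] //; rewrite mul0n; lia.
have := congr1 (logn 5) eq_mn.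
by rewrite !lognM ?muln_gt0 ?n_gt0 ?m_gt0 // (@logn_prime 5 5) //=; lia.
Qed.

Lemma mul_tau_neq_nat (n a : nat) : (0 < n)%nat -> INR n * tau <> INR a.
Proof.
move=> n_gt0 eq_na; apply: (sqr_neq_5_mul_sqr n (2 * a + n) n_gt0).
have root5 : sqrt 5 * INR n = INR (2 * a + n).
  by rewrite /tau in eq_na; rewrite plus_INR mult_INR /=; lra.
apply: INR_eq; rewrite !mult_INR -root5 /=.
by have := sqrt5_sq; nra.
Qed.

(** * The Fibonacci word as a mechanical word *)

Definition floor_tau (n : nat) : nat := Z.to_nat (Int_part (INR n * tau)).

Lemma INR_floor_tau n : INR (floor_tau n) = IZR (Int_part (INR n * tau)).
Proof.
have [_ lo] := base_Int_part (INR n * tau).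
have ge0 : 0 <= INR n * tau.
  by apply: Rmult_le_pos; [exact: pos_INR | have := tau_bounds; lra].
have gt_m1 : (-1 < Int_part (INR n * tau))%Z by apply: lt_IZR; lra.
by rewrite /floor_tau INR_IZR_INZ Z2Nat.id //; lia.
Qed.

Lemma floor_tau_spec n :
  INR (floor_tau n) <= INR n * tau < INR (floor_tau n) + 1.
Proof. by rewrite INR_floor_tau; have := base_Int_part (INR n * tau); lra. Qed.

Lemma frac_part_tau n : frac_part (INR n * tau) = INR n * tau - INR (floor_tau n).
Proof. by rewrite INR_floor_tau. Qed.

Lemma floor_tau_eq n a : INR a <= INR n * tau < INR a + 1 -> floor_tau n = a.
Proof.
move=> bnd; rewrite /floor_tau -(Int_part_spec _ (Z.of_nat a)) ?Nat2Z.id //.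
by rewrite -INR_IZR_INZ; lra.
Qed.

Lemma INR_lt_succ (a b : nat) : INR a < INR b + 1 -> (a <= b)%nat.
Proof. by rewrite -S_INR => /INR_lt /ltP. Qed.

Lemma floor_tau_le (m n : nat) : (m <= n)%nat -> (floor_tau m <= floor_tau n)%nat.
Proof.
move=> /leP /le_INR le_mn; apply: INR_lt_succ.
by have := floor_tau_spec m; have := floor_tau_spec n; have := tau_bounds; nra.
Qed.

Lemma floor_tau_succ n : (floor_tau n.+1 <= (floor_tau n).+1)%nat.
Proof.
apply: INR_lt_succ; rewrite S_INR.
have := floor_tau_spec n; have := floor_tau_spec n.+1; rewrite S_INR.
by have := tau_bounds; lra.
Qed.

Definition mech_word (n : nat) : nat := (1 - (floor_tau n.+2 - floor_tau n.+1))%nat.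

Lemma floor_tau_sigma_image n (a := floor_tau n.+1) :
  [/\ floor_tau (n + a).+1 = n, floor_tau (n + a).+2 = n.+1
    & floor_tau n.+2 = a.+1 -> floor_tau (n + a).+3 = n.+1].
Proof.
have [lo hi] := floor_tau_spec n.+1; rewrite -/a in lo hi.
have := tau_sq; have := tau_bounds => tau_bnd tau2.
set theta := INR n.+1 * tau - INR a.
have theta_gt0 : 0 < theta.
  have : INR n.+1 * tau <> INR a by exact: mul_tau_neq_nat.
  by rewrite /theta; lra.
have theta_lt1 : theta < 1 by rewrite /theta; lra.
have pos c : INR (n + a + c) * tau = INR n.+1 - theta * tau + (INR c - 1) * tau.
  have a_theta : INR a = INR n.+1 * tau - theta by rewrite /theta; lra.
  rewrite !plus_INR a_theta S_INR.
  have : (INR n + 1) * (tau * tau) = (INR n + 1) * (1 - tau) by rewrite tau2.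
  by nra.
split=> [||a_step].
- by apply: floor_tau_eq; rewrite -addn1 pos S_INR /=; nra.
- by apply: floor_tau_eq; rewrite -addn2 pos !S_INR /=; nra.
- have theta_gt : 1 - tau < theta.
    have [lo2 _] := floor_tau_spec n.+2; rewrite a_step !S_INR in lo2.
    have : INR n.+2 * tau <> INR a.+1 by exact: mul_tau_neq_nat.
    by rewrite /theta !S_INR; lra.
  by apply: floor_tau_eq; rewrite -addn3 pos !S_INR /=; nra.
Qed.

Lemma floor_tau1 : floor_tau 1 = 0%nat.
Proof. by apply: floor_tau_eq; have := tau_bounds; rewrite /=; lra. Qed.

Lemma floor_tau2 : floor_tau 2 = 1%nat.
Proof. by apply: floor_tau_eq; have := tau_bounds; rewrite /=; lra. Qed.

Lemma fib_sigma_mech_word n :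
  fib_sigma (mkseq mech_word n) = mkseq mech_word (n + floor_tau n.+1).
Proof.
elim: n => [|n IH]; first by rewrite floor_tau1.
rewrite mkseqS /fib_sigma map_rcons flatten_rcons -/(fib_sigma _) IH.
have [img1 img2 img3] := floor_tau_sigma_image n.
set a := floor_tau n.+1 in IH img1 img2 img3 *.
have w_na : mech_word (n + a) = 0%nat by rewrite /mech_word img1 img2; lia.
have := floor_tau_succ n.+1; have := @floor_tau_le _ _ (leqnSn n.+1).
rewrite -/a => le_a le_Sa.
have [[-> ->]|[a_step ->]] : floor_tau n.+2 = a /\ mech_word n = 1%nat \/
    floor_tau n.+2 = a.+1 /\ mech_word n = 0%nat.
  by rewrite /mech_word -/a; lia.
- by rewrite addSn mkseqS cats1 w_na.
- have w_Sna : mech_word (n + a).+1 = 1%nat by rewrite /mech_word img3 ?img2 ?subnn.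
  by rewrite a_step addSn addnS !mkseqS -!cats1 -catA w_na w_Sna.
Qed.

Lemma fib_prefix_mech_word N :
  exists2 L, (N < L)%nat & fib_prefix N = mkseq mech_word L.
Proof.
elim: N => [|N [L lt_NL pref_N]].
  by exists 1%nat; rewrite // /mkseq /= /mech_word floor_tau2 floor_tau1.
exists (L + floor_tau L.+1)%nat.
  by have := @floor_tau_le 2 L.+1; rewrite floor_tau2; lia.
by rewrite /fib_prefix iterS -/(fib_prefix N) pref_N fib_sigma_mech_word.
Qed.

Lemma fibword_mech_word n : fibword n = mech_word n.
Proof.
have [L lt_nL pref] := fib_prefix_mech_word n.+1.
by rewrite /fibword pref nth_mkseq //; lia.
Qed.

(** * Fibonacci numbers and the rotation by tau *)

Fixpoint fib (n : nat) : nat :=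
  if n is p.+1 then (if p is q.+1 then fib p + fib q else 1) else 0.

Lemma fibSS n : fib n.+2 = (fib n.+1 + fib n)%nat.
Proof. by []. Qed.

Lemma fib_gt0 n : (0 < fib n.+1)%nat.
Proof. by elim: n => [|n IH] //; rewrite fibSS; lia. Qed.

Lemma fib_le_succ n : (fib n <= fib n.+1)%nat.
Proof. by case: n => [|n] //; rewrite fibSS; lia. Qed.

Lemma fib_mul_tau k : INR (fib k.+1) * tau - INR (fib k) = - (- tau) ^ k.+1.
Proof.
elim: k => [|k IH]; first by rewrite /=; lra.
have -> : - (- tau) ^ k.+2 = - tau * - (- tau) ^ k.+1 by rewrite /=; ring.
rewrite -IH fibSS plus_INR.
have : INR (fib k.+1) * (tau * tau) = INR (fib k.+1) * (1 - tau) by rewrite tau_sq.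
by nra.
Qed.

Lemma binet n : sqrt 5 * INR (fib n) = golden_ratio ^ n - (- tau) ^ n.
Proof.
rewrite golden_ratio_tau sqrt5_tau.
have phi_sq : (1 + tau) * (1 + tau) = (1 + tau) + 1 by have := tau_sq; lra.
suff [] : (1 + 2 * tau) * INR (fib n) = (1 + tau) ^ n - (- tau) ^ n /\
          (1 + 2 * tau) * INR (fib n.+1) = (1 + tau) ^ n.+1 - (- tau) ^ n.+1 by [].
elim: n => [|n [IH1 IH2]]; first by rewrite /=; lra.
split=> //; rewrite fibSS plus_INR Rmult_plus_distr_l IH1 IH2.
have -> : (1 + tau) ^ n.+2 = (1 + tau) * (1 + tau) * (1 + tau) ^ n by rewrite /=; ring.
have -> : (- tau) ^ n.+2 = (tau * tau) * (- tau) ^ n by rewrite /=; ring.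
by rewrite phi_sq tau_sq /=; ring.
Qed.

Lemma lucas n : INR (fib n + fib n.+2) = golden_ratio ^ n.+1 + (- tau) ^ n.+1.
Proof.
apply: (Rmult_eq_reg_l (sqrt 5)); last by have := sqrt5_bounds; lra.
rewrite plus_INR Rmult_plus_distr_l !binet golden_ratio_tau sqrt5_tau /=.
set P := (1 + tau) ^ n; set Q := (- tau) ^ n.
have : P * (tau * tau) = P * (1 - tau) by rewrite tau_sq.
have : Q * (tau * tau) = Q * (1 - tau) by rewrite tau_sq.
by nra.
Qed.

Lemma frac_part_IZR_add (z : Z) f : 0 <= f < 1 -> frac_part (IZR z + f) = f.
Proof. by move=> f01; have [_ <-] := Int_part_frac_part_spec (IZR z + f) z f f01 erefl. Qed.

Lemma frac_part_add_fib j z : odd j -> tau ^ j.+1 <= frac_part z ->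
  frac_part (z + INR (fib j.+1) * tau) = frac_part z - tau ^ j.+1.
Proof.
move=> odd_j le_z.
have shift : INR (fib j.+1) * tau = INR (fib j) - tau ^ j.+1.
  by have := fib_mul_tau j; rewrite pow_opp /= odd_j /=; lra.
rewrite {1}(Rplus_Int_part_frac_part z) shift INR_IZR_INZ.
have -> : IZR (Int_part z) + frac_part z + (IZR (Z.of_nat (fib j)) - tau ^ j.+1) =
    IZR (Int_part z + Z.of_nat (fib j)) + (frac_part z - tau ^ j.+1).
  by rewrite plus_IZR; ring.
by apply: frac_part_IZR_add; have := base_fp z; have := pow_tau_pos j.+1; lra.
Qed.

Definition orbit_hits (z : R) (n : nat) : Prop :=
  exists t, (t < fib n.+2)%nat /\ frac_part (z + INR t * tau) < tau ^ n.

Lemma orbit_hits0 z : orbit_hits z 0.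
Proof. by exists 0%nat; split => //; have := base_fp (z + INR 0 * tau); rewrite /=; lra. Qed.

Lemma orbit_hits1 z : orbit_hits z 1.
Proof.
have := tau_bounds; have := base_fp z => fz tau_bnd.
case: (Rlt_le_dec (frac_part z) tau) => [small|large].
  by exists 0%nat; split => //; rewrite /= Rmult_0_l Rplus_0_r; lra.
have frac_tau : frac_part tau = tau.
  by rewrite -[tau]Rplus_0_l frac_part_IZR_add //; lra.
exists 1%nat; split => //; rewrite /= Rmult_1_l plus_frac_part1 frac_tau //; lra.
Qed.

Lemma orbit_hits_SS n z : orbit_hits z n -> orbit_hits z n.+1 -> orbit_hits z n.+2.
Proof.
move=> [t0 [lt_t0 hit0]] [t1 [lt_t1 hit1]].
have := pow_tau_SS n; have := pow_tau_SS n.+1; have := pow_tau_SS n.+2.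
have := pow_tau_pos n.+4 => pos4 e4 e3 e2.
have := fibSS n.+2; have := fibSS n.+1 => f3 f4.
have shifted t j : z + INR (t + fib j) * tau = z + INR t * tau + INR (fib j) * tau.
  by rewrite plus_INR; ring.
case/boolP: (odd n) => [odd_n|even_n].
- set x := frac_part (z + INR t0 * tau) in hit0.
  case: (Rlt_le_dec x (tau ^ n.+2)) => [small|ge2].
    by exists t0; split => //; lia.
  case: (Rlt_le_dec x (tau ^ n.+1)) => [lt1|ge1].
    exists (t0 + fib n.+3)%nat; split; first lia.
    by rewrite shifted frac_part_add_fib -/x; [lra | rewrite /= negbK | lra].
  exists (t0 + fib n.+1)%nat; split; first lia.
  by rewrite shifted frac_part_add_fib // -/x; lra.
- set x := frac_part (z + INR t1 * tau) in hit1.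
  case: (Rlt_le_dec x (tau ^ n.+2)) => [small|ge2].
    by exists t1; split => //; lia.
  exists (t1 + fib n.+2)%nat; split; first lia.
  by rewrite shifted frac_part_add_fib // -/x; lra.
Qed.

Lemma orbit_hits_all n z : orbit_hits z n.
Proof.
suff [] : orbit_hits z n /\ orbit_hits z n.+1 by [].
elim: n => [|n [IH1 IH2]]; first by split; [exact: orbit_hits0 | exact: orbit_hits1].
by split; last exact: orbit_hits_SS.
Qed.

(** * Distinct factors *)

Lemma floor_tau_add_carry0 x D :
  frac_part (INR x * tau) + frac_part (INR D * tau) < 1 ->
  floor_tau (x + D) = (floor_tau x + floor_tau D)%nat.
Proof.
rewrite !frac_part_tau => no_carry; apply: floor_tau_eq; rewrite !plus_INR.
by have := floor_tau_spec x; have := floor_tau_spec D; lra.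
Qed.

Lemma floor_tau_add_carry1 x D :
  1 <= frac_part (INR x * tau) + frac_part (INR D * tau) ->
  floor_tau (x + D) = (floor_tau x + floor_tau D).+1.
Proof.
rewrite !frac_part_tau => carry; apply: floor_tau_eq; rewrite S_INR !plus_INR.
by have := floor_tau_spec x; have := floor_tau_spec D; lra.
Qed.

Lemma nth_factor x p m t : (t < m)%nat -> nth 0%nat (factor x p m) t = x (p + t)%nat.
Proof. by move=> lt_tm; rewrite /factor (nth_map 0%nat) ?size_iota // nth_iota. Qed.

Lemma factor_fibword_neq p D m n :
  (fib n.+2 <= m.+1)%nat -> tau ^ n <= frac_part (INR D * tau) <= 1 - tau ^ n ->
  factor fibword p m <> factor fibword (p + D) m.
Proof.
move=> le_fib_m [frac_lo frac_hi] eq_factors.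
(* equal factors keep floor_tau (x + D) - floor_tau x constant on the window,
   while the two orbit hits below give it the values floor_tau D + 1 and floor_tau D *)
have step_eq t : (t < m)%nat -> mech_word (p + t) = mech_word (p + D + t).
  by move=> lt_tm; rewrite -!fibword_mech_word -!(nth_factor _ _ _ _ lt_tm) eq_factors.
have gap_const t : (t <= m)%nat ->
    (floor_tau (p.+1 + t + D) - floor_tau (p.+1 + t) =
     floor_tau (p.+1 + D) - floor_tau p.+1)%nat.
  elim: t => [|t IH] le_tm; first by rewrite addn0.
  rewrite -IH ?(ltnW le_tm) //; have := step_eq t le_tm; rewrite /mech_word.
  change (p + t)%nat.+2 with (p.+1 + t)%nat.+1; change (p + t)%nat.+1 with (p.+1 + t)%nat.
  have -> : (p + D + t).+2 = (p.+1 + t + D).+1 by lia.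
  have -> : (p + D + t).+1 = (p.+1 + t + D)%nat by lia.
  have -> : (p.+1 + t.+1 + D)%nat = (p.+1 + t + D).+1 by lia.
  have -> : (p.+1 + t.+1)%nat = (p.+1 + t).+1 by lia.
  have := floor_tau_succ (p.+1 + t); have := floor_tau_succ (p.+1 + t + D).
  have := @floor_tau_le (p.+1 + t) (p.+1 + t + D) (leq_addr _ _).
  have := @floor_tau_le (p.+1 + t) (p.+1 + t).+1 (leqnSn _).
  have := @floor_tau_le (p.+1 + t + D) (p.+1 + t + D).+1 (leqnSn _).
  by lia.
have [t1 [lt_t1 hit1]] := orbit_hits_all n (INR (p.+1 + D) * tau).
have [t2 [lt_t2 hit2]] := orbit_hits_all n (INR p.+1 * tau).
have carry1 : floor_tau (p.+1 + t1 + D) = (floor_tau (p.+1 + t1) + floor_tau D).+1.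
  apply: floor_tau_add_carry1; apply: Rnot_lt_le => no_carry.
  move: hit1.
  have -> : INR (p.+1 + D) * tau + INR t1 * tau = INR (p.+1 + t1) * tau + INR D * tau.
    by rewrite !plus_INR; ring.
  rewrite plus_frac_part2 //.
  by have := base_fp (INR (p.+1 + t1) * tau); lra.
have carry0 : floor_tau (p.+1 + t2 + D) = (floor_tau (p.+1 + t2) + floor_tau D)%nat.
  apply: floor_tau_add_carry0; move: hit2.
  have -> : INR p.+1 * tau + INR t2 * tau = INR (p.+1 + t2) * tau by rewrite plus_INR; ring.
  by lra.
have := gap_const t1; have := gap_const t2; lia.
Qed.

(** * The block length *)

Lemma pow_crossing (q x : R) : 0 < q < 1 -> 1 < x ->
  exists r, 1 < x * q ^ r /\ x * q ^ r.+1 <= 1.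
Proof.
move=> q01 x_gt1.
have [N small] : exists N, x * q ^ N <= 1.
  have abs_q : Rabs q < 1 by rewrite Rabs_pos_eq; lra.
  have inv_x : 0 < / x by apply: Rinv_0_lt_compat; lra.
  have [N HN] := pow_lt_1_zero q abs_q (/ x) inv_x.
  exists N; have := HN N (le_n N); rewrite Rabs_pos_eq; last by apply: pow_le; lra.
  move=> lt_inv; rewrite -(Rinv_r x); last by lra.
  by apply: Rlt_le; apply: Rmult_lt_compat_l; lra.
elim: N small => [|N IH] small; first by rewrite /= in small; lra.
by case: (Rlt_le_dec 1 (x * q ^ N)) => [big|le1]; [exists N | exact: IH].
Qed.

Lemma golden_ratio_pow_tau n : golden_ratio ^ n * tau ^ n = 1.
Proof.
rewrite -Rpow_mult_distr golden_ratio_tau.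
have -> : (1 + tau) * tau = 1 by have := tau_sq; lra.
exact: pow1.
Qed.

Lemma block_length_bound r k : 1 < 2 * INR k * tau ^ r.+1 ->
  INR (2 * fib r.+2) <= 4 / sqrt 5 * golden_ratio * INR k.
Proof.
move=> crossing.
have := tau_bounds; have := sqrt5_bounds => s5 tau_bnd.
have phi_gt1 : 1 < golden_ratio by rewrite golden_ratio_tau; lra.
have := pow_tau_pos r.+1; have := pow_tau_pos r.+2 => pos2 pos1.
have phi_pow_lt : golden_ratio ^ r.+1 < 2 * INR k.
  have := golden_ratio_pow_tau r.+1; have := pow_lt golden_ratio r.+1 ltac:(lra); nra.
suff bound : sqrt 5 * INR (fib r.+2) <= 2 * golden_ratio * INR k.
  rewrite mult_INR; apply: (Rmult_le_reg_l (sqrt 5)); first lra.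
  have -> : sqrt 5 * (4 / sqrt 5 * golden_ratio * INR k) = 4 * golden_ratio * INR k.
    by field; lra.
  by rewrite [INR 2]/=; lra.
have phi_pow_S : golden_ratio ^ r.+2 = golden_ratio * golden_ratio ^ r.+1 by [].
rewrite binet pow_opp; case: ifP => odd_r2; last by nra.
(* for odd r, the Lucas number phi^(r+1) + tau^(r+1) is an integer below 2 k + 1 *)
have lucas_r : INR (fib r + fib r.+2) = golden_ratio ^ r.+1 + tau ^ r.+1.
  by rewrite lucas pow_opp; move: odd_r2; rewrite /= negbK => ->.
have lucas_le : INR (fib r + fib r.+2) <= 2 * INR k.
  have : (fib r + fib r.+2 <= 2 * k)%nat.
    apply: INR_lt_succ; rewrite lucas_r mult_INR [INR 2]/=.
    by have := pow_lt_1_compat tau r.+1 ltac:(lra) ltac:(lia); lra.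
  by move=> /leP /le_INR; rewrite mult_INR [INR 2]/=; lra.
have tau_pow_S : tau ^ r.+2 = tau * tau ^ r.+1 by [].
have : tau * tau ^ r.+1 <= golden_ratio * tau ^ r.+1 by apply: Rmult_le_compat_r; lra.
by rewrite lucas_r in lucas_le; nra.
Qed.

Lemma frac_part_block_shift r k d : (0 < d < k)%nat -> 2 * INR k * tau ^ r.+2 <= 1 ->
  tau ^ r.+1 <= frac_part (INR (d * (2 * fib r.+2)) * tau) <= 1 - tau ^ r.+1.
Proof.
move=> /andP[d_gt0 lt_dk] small.
have := tau_bounds; have := pow_tau_pos r.+1; have := pow_tau_pos r.+2 => pos2 pos1 tau_bnd.
have tau_pow_S : tau ^ r.+2 = tau * tau ^ r.+1 by [].
have d_ge1 : 1 <= INR d by apply: (le_INR 1); lia.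
have d_lt_k : INR d + 1 <= INR k by rewrite -S_INR; apply: le_INR; lia.
set u := 2 * INR d * tau ^ r.+2.
have u_bnd : tau ^ r.+1 <= u <= 1 - tau ^ r.+1.
  have : tau ^ r.+1 <= 2 * tau ^ r.+2 by rewrite tau_pow_S; nra.
  have : 2 * tau ^ r.+2 <= u by rewrite /u; nra.
  have : u <= 2 * INR k * tau ^ r.+2 - 2 * tau ^ r.+2 by rewrite /u; nra.
  by lra.
set F := INR (fib r.+1).
have shift : INR (d * (2 * fib r.+2)) * tau = 2 * INR d * F - 2 * INR d * (- tau) ^ r.+2.
  have := fib_mul_tau r.+1; rewrite !mult_INR [INR 2]/= -/F => fib_shift.
  have -> : INR d * ((1 + 1) * INR (fib r.+2)) * tau = 2 * INR d * (INR (fib r.+2) * tau).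
    by ring.
  by rewrite (_ : INR (fib r.+2) * tau = F - (- tau) ^ r.+2); [ring | lra].
have IZR_F : IZR (Z.of_nat (2 * d * fib r.+1)) = 2 * INR d * F.
  by rewrite -INR_IZR_INZ !mult_INR.
rewrite shift pow_opp; case: ifP => _.
- rewrite (_ : _ - _ = IZR (Z.of_nat (2 * d * fib r.+1)) + u); last by rewrite IZR_F /u; ring.
  by rewrite frac_part_IZR_add; lra.
- rewrite (_ : _ - _ = IZR (Z.of_nat (2 * d * fib r.+1) - 1) + (1 - u)).
    by rewrite frac_part_IZR_add; lra.
  by rewrite minus_IZR IZR_F /u; ring.
Qed.

Lemma antipower_at_fibword i k r : 2 * INR k * tau ^ r.+2 <= 1 ->
  antipower_at fibword i k (2 * fib r.+2)%nat.
Proof.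
move=> small; set m := (2 * fib r.+2)%nat.
have fib_m : (fib r.+3 <= m.+1)%nat.
  by have := fib_le_succ r.+1; have := fibSS r.+1; rewrite /m; lia.
have blocks_neq a b : (a < b < k)%nat ->
    factor fibword (i + a * m) m <> factor fibword (i + b * m) m.
  move=> /andP[lt_ab lt_bk].
  have -> : (i + b * m = i + a * m + (b - a) * m)%nat.
    by rewrite mulnBl; have := @leq_mul a m b m (ltnW lt_ab) (leqnn m); lia.
  apply: factor_fibword_neq fib_m _.
  by apply: (@frac_part_block_shift r k (b - a) _ small); lia.
rewrite /antipower_at map_inj_in_uniq ?iota_uniq // => a b.
rewrite !mem_iota !add0n => /andP[_ lt_ak] /andP[_ lt_bk] eq_ab.
case: (ltngtP a b) => // [lt_ab|lt_ba]; exfalso; move: eq_ab.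
  by apply: blocks_neq; rewrite lt_ab lt_bk.
by move/esym; apply: blocks_neq; rewrite lt_ba lt_ak.
Qed.

Close Scope R_scope.

Theorem theorem6 :
  exists c : R,
    (c <= 4 / sqrt 5 * golden_ratio)%R /\
    forall k : nat, 0 < k ->
    forall i : nat,
      exists m : nat, 0 < m /\ (INR m <= c * INR k)%R /\ antipower_at fibword i k m.
Proof.
exists (4 / sqrt 5 * golden_ratio)%R; split=> [|k k_gt0 i]; first exact: Rle_refl.
have k_ge1 : (1 <= INR k)%R by apply: (le_INR 1); lia.
have := tau_bounds => tau_bnd.
have [r [crossing small]] :
    exists r, (1 < 2 * INR k * tau ^ r.+1 /\ 2 * INR k * tau ^ r.+2 <= 1)%R.
  have [r [big small]] := pow_crossing tau (2 * INR k) ltac:(lra) ltac:(lra).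
  case: r big small => [|r] big small; last by exists r.
  by rewrite /= in small; nra.
exists (2 * fib r.+2); split; first by rewrite muln_gt0 fib_gt0.
split; [exact: block_length_bound | exact: antipower_at_fibword].
Qed.
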